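(* Let $n\ge1$. If $K$ is an $\mathcal{N}$-set in $\mathbb{R}^n$, then $A=(K-K)\cap\mathbb{Z}^n$ is a finite set of lattice points which generates the additive group $\mathbb{Z}^n$.
   Context: $K-K=\{x-y : x,y\in K\}$. An $\mathcal{N}$-set in $\mathbb{R}^n$ is a compact set $K\subseteq\mathbb{R}^n$ such that for every $x\in\mathbb{R}^n$ there exists $y\in K$ with $x-y\in\mathbb{Z}^n$. *)

From Stdlib Require Import Reals List ZArith.
From Stdlib Require Fin.
Open Scope R_scope.

Definition Rn (n : nat) : Type := Fin.t n -> R.
Definition Zn (n : nat) : Type := Fin.t n -> Z.

(* Open sets of R^n for the standard (product = Euclidean) topology,
   described with sup-norm balls. *)
Definition open_Rn {n : nat} (U : Rn n -> Prop) : Prop :=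
  forall x, U x -> exists eps, 0 < eps /\
    forall y : Rn n, (forall i, Rabs (y i - x i) < eps) -> U y.

Definition compact_Rn {n : nat} (K : Rn n -> Prop) : Prop :=
  forall (I : Type) (U : I -> Rn n -> Prop),
    (forall j, open_Rn (U j)) ->
    (forall x, K x -> exists j, U j x) ->
    exists l : list I, forall x, K x -> exists j, In j l /\ U j x.

Definition diff_is_lattice {n : nat} (x y : Rn n) (z : Zn n) : Prop :=
  forall i, x i - y i = IZR (z i).

Definition N_set {n : nat} (K : Rn n -> Prop) : Prop :=
  compact_Rn K /\
  forall x : Rn n, exists y, K y /\ exists z : Zn n, diff_is_lattice x y z.

Definition diff_lattice_set {n : nat} (K : Rn n -> Prop) (z : Zn n) : Prop :=
  exists x y, K x /\ K y /\ diff_is_lattice x y z.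

Definition finite_set {T : Type} (A : T -> Prop) : Prop :=
  exists l : list T, forall a, A a <-> In a l.

Inductive gen_subgroup {n : nat} (A : Zn n -> Prop) : Zn n -> Prop :=
| gen_in : forall a, A a -> gen_subgroup A a
| gen_zero : gen_subgroup A (fun _ => 0%Z)
| gen_add : forall a b, gen_subgroup A a -> gen_subgroup A b ->
    gen_subgroup A (fun i => (a i + b i)%Z)
| gen_opp : forall a, gen_subgroup A a -> gen_subgroup A (fun i => (- a i)%Z).

Definition generates_Zn {n : nat} (A : Zn n -> Prop) : Prop :=
  forall z : Zn n, gen_subgroup A z.

From Stdlib Require Import Reals List ZArith Lra Lia.
From Stdlib Require Fin.
From Stdlib Require Import Classical FunctionalExtensionality.
Open Scope R_scope.

(* Let K be an N-set in R^n and A = (K - K) ∩ Z^n.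

   Finiteness: a compact set is bounded, so A lies in a bounded box of
   lattice points, and such a box is a finite list.

   Generation: let G be the subgroup generated by A and call x "good" when
   x = y + z for some y in K and some z in G.  Two representations
   x = y1 + z1 = y2 + z2 with y1, y2 in K give z2 - z1 = y1 - y2 in A, so a good
   point has ALL its representations in G.  Compactness shows that for each x
   the coset x + Z^n is "closed near K": there is d > 0 such that every point
   of x + Z^n at distance < d from K lies in K.  Together with the covering
   property of K this makes "good" a locally constant predicate on R^n, hence
   a constant one (R^n is connected, which we prove along segments using the
   least upper bound property).  Points of K are good, so y0 + z is good for
   y0 in K and any z in Z^n; its representation y0 + z then forces z in G. *)

Lemma fin_min (n : nat) (f : Fin.t n -> R) :
  (forall i, 0 < f i) -> exists e, 0 < e /\ forall i, e <= f i.
Proof.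
  induction n as [|n IH]; intros Hpos.
  - exists 1. split; [lra|]. intro i. exact (Fin.case0 (fun i => 1 <= f i) i).
  - destruct (IH (fun i => f (Fin.FS i))) as [e [He Hle]]; [intro i; apply Hpos|].
    exists (Rmin (f Fin.F1) e). split; [apply Rmin_glb_lt; auto|].
    intro i. refine (Fin.caseS' i (fun i => _ <= f i) _ _).
    + apply Rmin_l.
    + intro p. eapply Rle_trans; [apply Rmin_r|apply (Hle p)].
Qed.

Lemma fin_max (n : nat) (f : Fin.t n -> R) : exists M, forall i, f i <= M.
Proof.
  induction n as [|n IH].
  - exists 0. intro i. exact (Fin.case0 (fun i => f i <= 0) i).
  - destruct (IH (fun i => f (Fin.FS i))) as [M HM].
    exists (Rmax (f Fin.F1) M). intro i.
    refine (Fin.caseS' i (fun i => f i <= _) _ _).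
    + apply Rmax_l.
    + intro p. eapply Rle_trans; [apply (HM p)|apply Rmax_r].
Qed.

(* Open sup-norm balls, possibly emptied by a side condition Q, are open;
   Q lets a cover attach extra information to each ball. *)
Lemma sup_ball_open (n : nat) (c : Rn n) (r : R) (Q : Prop) :
  open_Rn (fun y : Rn n => Q /\ forall i, Rabs (y i - c i) < r).
Proof.
  intros y [HQ Hy].
  destruct (fin_min n (fun i => r - Rabs (y i - c i))) as [e [He Hle]].
  { intro i; specialize (Hy i); lra. }
  exists e. split; auto. intros y' Hy'. split; auto. intro i.
  specialize (Hle i); specialize (Hy' i); simpl in Hle.
  pose proof (Rabs_triang (y' i - y i) (y i - c i)) as Htri.
  replace (y' i - y i + (y i - c i)) with (y' i - c i) in Htri by ring. lra.
Qed.

Lemma list_positive_min (l : list R) (c : R) : 0 < c ->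
  exists d, 0 < d /\ d <= c /\ forall r, In r l -> 0 < r -> d <= r.
Proof.
  intro Hc. induction l as [|h t [d [Hd [Hdc Hle]]]].
  - exists c. repeat split; auto; [lra|]. intros r [].
  - destruct (Rlt_dec 0 h) as [Hh|Hh].
    + exists (Rmin h d). split; [apply Rmin_glb_lt; auto|]. split.
      * eapply Rle_trans; [apply Rmin_r|auto].
      * intros r [<-|Hr] Hr0; [apply Rmin_l|].
        eapply Rle_trans; [apply Rmin_r|auto].
    + exists d. repeat split; auto. intros r [<-|Hr] Hr0; [contradiction|auto].
Qed.

(* Compact sets are bounded: cover R^n by the balls of integer radius. *)
Lemma compact_bounded (n : nat) (K : Rn n -> Prop) :
  compact_Rn K -> exists B, forall y, K y -> forall i, Rabs (y i) < B.
Proof.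
  intros Hc.
  destruct (Hc nat
    (fun m (y : Rn n) => True /\ forall i, Rabs (y i - 0) < INR m)) as [l Hl].
  - intro m. apply (sup_ball_open n (fun _ => 0)).
  - intros y _. destruct (fin_max n (fun i => Rabs (y i - 0))) as [M HM].
    destruct (INR_unbounded M) as [m Hm]. exists m. split; auto.
    intro i. specialize (HM i). simpl in HM. lra.
  - set (B := fold_right (fun m acc => Rmax (INR m) acc) 0 l).
    assert (HB : forall m, In m l -> INR m <= B).
    { unfold B. clear Hl. induction l as [|h t IH]; simpl; intros m Hm;
        [contradiction|].
      destruct Hm as [<-|Hm]; [apply Rmax_l|].
      eapply Rle_trans; [apply IH; auto|apply Rmax_r]. }
    exists B. intros y Hy i. destruct (Hl y Hy) as [m [Hm [_ Hball]]].
    specialize (Hball i). specialize (HB m Hm).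
    rewrite Rminus_0_r in Hball. lra.
Qed.

Lemma lattice_box_listed (n : nat) (N : Z) : exists l : list (Zn n),
  forall z : Zn n, (forall i, (-N <= z i <= N)%Z) -> In z l.
Proof.
  induction n as [|n [l' Hl']].
  - exists ((fun _ => 0%Z) :: nil). intros z _. left.
    extensionality i. exact (Fin.case0 (fun i => 0%Z = z i) i).
  - set (range := map (fun k => (Z.of_nat k - N)%Z) (seq 0 (Z.to_nat (2*N+1)))).
    set (cons_coord := fun (a : Z) (z' : Zn n) =>
      (fun i : Fin.t (S n) => Fin.caseS' i (fun _ => Z) a z') : Zn (S n)).
    exists (flat_map (fun a => map (cons_coord a) l') range).
    intros z Hz. apply in_flat_map. exists (z Fin.F1). split.
    + apply in_map_iff. exists (Z.to_nat (z Fin.F1 + N)).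
      specialize (Hz Fin.F1). split; [lia|]. apply in_seq. lia.
    + apply in_map_iff. exists (fun i => z (Fin.FS i)). split.
      * extensionality i. unfold cons_coord.
        refine (Fin.caseS' i (fun i => _ = z i) _ _); reflexivity.
      * apply Hl'. intro i. apply Hz.
Qed.

(* A set contained in a list is finite (its members can be decided classically). *)
Lemma finite_of_listed {T : Type} (A : T -> Prop) (l : list T) :
  (forall a, A a -> In a l) -> finite_set A.
Proof.
  revert A. induction l as [|h t IH]; intros A HA.
  - exists nil. intro a; split; [intro Ha; apply (HA a Ha)|intros []].
  - destruct (IH (fun a => A a /\ a <> h)) as [l' Hl'].
    { intros a [Ha Hne]. destruct (HA a Ha); [congruence|auto]. }
    destruct (classic (A h)) as [Hh|Hh].
    + exists (h :: l'). intro a. split.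
      * intro Ha. destruct (classic (a = h)) as [->|Hne];
          [left; auto|right; apply Hl'; auto].
      * intros [<-|Hin]; auto. apply Hl' in Hin; tauto.
    + exists l'. intro a. split.
      * intro Ha. apply Hl'. split; auto. intros ->; auto.
      * intro Hin; apply Hl' in Hin; tauto.
Qed.

(* (K - K) ∩ Z^n is finite for compact K: its points lie in a box of side 2B. *)
Lemma diff_lattice_finite (n : nat) (K : Rn n -> Prop) :
  compact_Rn K -> finite_set (diff_lattice_set K).
Proof.
  intro Hc. destruct (compact_bounded n K Hc) as [B HB].
  set (N := up (2 * B)).
  destruct (lattice_box_listed n N) as [l Hl].
  apply (finite_of_listed _ l). intros z [x [y [Hx [Hy Hz]]]]. apply Hl. intro i.
  specialize (Hz i). pose proof (HB x Hx i) as Hxi. pose proof (HB y Hy i) as Hyi.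
  destruct (archimed (2 * B)) as [HN _]. fold N in HN.
  apply Rabs_def2 in Hxi; apply Rabs_def2 in Hyi.
  assert (Hup : IZR (z i) < IZR N) by lra.
  assert (Hlo : IZR (- N) < IZR (z i)) by (rewrite opp_IZR; lra).
  apply lt_IZR in Hup; apply lt_IZR in Hlo. lia.
Qed.

Definition in_coset {n : nat} (x y : Rn n) : Prop := exists w, diff_is_lattice x y w.

Lemma IZR_abs_lt_1 (m : Z) : Rabs (IZR m) < 1 -> m = 0%Z.
Proof.
  intro Hm. apply Rabs_def2 in Hm. destruct Hm as [Hlt Hgt].
  apply lt_IZR in Hlt.
  assert (Hgt' : IZR (-1) < IZR m) by (change (IZR (-1)) with (-1); lra).
  apply lt_IZR in Hgt'. lia.
Qed.

(* The only integer candidate for t is up t - 1; if t differs from it,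
   t stays a positive distance 2r away from every integer. *)
Lemma noninteger_gap (t : R) : t <> IZR (up t - 1) ->
  exists r, 0 < r /\ forall m : Z, 2 * r <= Rabs (t - IZR m).
Proof.
  intros Hne. destruct (archimed t) as [Hup1 Hup2].
  rewrite minus_IZR in Hne.
  set (u := IZR (up t)) in *. set (f := t - (u - 1)).
  assert (Hf0 : 0 < f) by (unfold f; lra).
  assert (Hf1 : f < 1) by (unfold f; lra).
  exists (Rmin f (1 - f) / 2). split.
  - assert (0 < Rmin f (1 - f)) by (apply Rmin_glb_lt; lra). lra.
  - intro m. replace (2 * (Rmin f (1 - f) / 2)) with (Rmin f (1 - f)) by field.
    destruct (Z_le_gt_dec m (up t - 1)) as [Hm|Hm].
    + apply IZR_le in Hm. rewrite minus_IZR in Hm. fold u in Hm.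
      eapply Rle_trans; [apply Rmin_l|]. rewrite Rabs_right; unfold f; lra.
    + assert (Hm' : (up t <= m)%Z) by lia. apply IZR_le in Hm'. fold u in Hm'.
      eapply Rle_trans; [apply Rmin_r|]. rewrite Rabs_left1; unfold f; lra.
Qed.

Lemma coset_or_separated (n : nat) (x k : Rn n) :
  in_coset x k \/
  exists r, 0 < r /\ forall y, in_coset x y -> exists i, 2 * r <= Rabs (y i - k i).
Proof.
  destruct (classic (forall i, k i - x i = IZR (up (k i - x i) - 1))) as [Hint|Hfrac].
  - left. exists (fun i => (- (up (k i - x i) - 1))%Z). intro i.
    rewrite opp_IZR, <- Hint. ring.
  - right. apply not_all_ex_not in Hfrac. destruct Hfrac as [i Hi].
    destruct (noninteger_gap _ Hi) as [r [Hr Hgap]].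
    exists r. split; auto. intros y [w Hw]. exists i.
    specialize (Hgap (- w i)%Z). specialize (Hw i). rewrite opp_IZR in Hgap.
    replace (y i - k i) with (- (k i - x i - - IZR (w i))) by lra.
    rewrite Rabs_Ropp. exact Hgap.
Qed.

Lemma coset_discrete (n : nat) (x y y' : Rn n) :
  in_coset x y -> in_coset x y' -> (forall i, Rabs (y i - y' i) < 1) -> y = y'.
Proof.
  intros [w Hw] [w' Hw'] Hclose. extensionality i.
  assert (Hzero : (w' i - w i)%Z = 0%Z).
  { apply IZR_abs_lt_1. rewrite minus_IZR, <- (Hw i), <- (Hw' i).
    replace (x i - y' i - (x i - y i)) with (y i - y' i) by ring. apply Hclose. }
  specialize (Hw i); specialize (Hw' i).
  assert (IZR (w i) = IZR (w' i)) by (f_equal; lia). lra.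
Qed.

(* Cover K by balls B(k, r) where either k ∈ K ∩ (x+Z^n)
   and r = 1/2, or B(k, 2r) misses x + Z^n; take d = minimal radius of a finite
   subcover. *)
Lemma coset_closed_near_compact (n : nat) (K : Rn n -> Prop) (x : Rn n) :
  compact_Rn K ->
  exists d, 0 < d /\ forall k y, K k -> in_coset x y ->
    (forall i, Rabs (y i - k i) < d) -> K y.
Proof.
  intros Hc.
  set (admissible := fun (k : Rn n) (r : R) => 0 < r /\
     ((K k /\ in_coset x k /\ r = /2) \/
      (forall y, in_coset x y -> exists i, 2 * r <= Rabs (y i - k i)))).
  destruct (Hc (Rn n * R)%type
    (fun p (y : Rn n) => admissible (fst p) (snd p) /\
                         forall i, Rabs (y i - fst p i) < snd p)) as [l Hl].
  - intros [k r]. apply sup_ball_open.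
  - intros k Hk.
    assert (Hcentre : forall r, 0 < r -> forall i, Rabs (k i - k i) < r).
    { intros r Hr i. rewrite Rminus_diag, Rabs_R0. exact Hr. }
    destruct (coset_or_separated n x k) as [Hcos|[r [Hr Hsep]]].
    + exists (k, /2). simpl. split; [|apply Hcentre; lra].
      split; [lra|]. left. auto.
    + exists (k, r). simpl. split; [|apply Hcentre; exact Hr].
      split; auto.
  - destruct (list_positive_min (map snd l) (/2)) as [d [Hd [_ Hdmin]]]; [lra|].
    exists d. split; auto. intros k y Hk Hy Hyk.
    destruct (Hl k Hk) as [[kj rj] [Hin [[Hr Hadm] Hball]]]. simpl in *.
    assert (Hdr : d <= rj) by (apply (Hdmin rj); auto; apply (in_map snd l _ Hin)).
    assert (Hnear : forall i, Rabs (y i - kj i) < 2 * rj).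
    { intro i. specialize (Hyk i); specialize (Hball i).
      apply Rabs_def2 in Hyk; apply Rabs_def2 in Hball. apply Rabs_def1; lra. }
    destruct Hadm as [[Hkj [Hkjcos ->]]|Hsep].
    + replace y with kj; auto. symmetry. apply (coset_discrete n x); auto.
      intro i. specialize (Hnear i). lra.
    + exfalso. destruct (Hsep y Hy) as [i Hi]. specialize (Hnear i). lra.
Qed.

(* [0, 1] is connected: a locally constant predicate true at 0 is true at 1.
   Take the supremum m of the t such that P holds on [0, t]; local constancy
   at m shows P holds on a neighbourhood of m, forcing m = 1. *)
Lemma unit_interval_connected (P : R -> Prop) :
  (forall t, exists eta, 0 < eta /\ forall s, Rabs (s - t) < eta -> (P s <-> P t)) ->
  P 0 -> P 1.
Proof.
  intros Hloc P0.
  set (E := fun t => 0 <= t <= 1 /\ forall s, 0 <= s <= t -> P s).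
  assert (HE0 : E 0).
  { split; [lra|]. intros s Hs. replace s with 0 by lra. exact P0. }
  destruct (completeness E) as [m [Hub Hlub]].
  - exists 1. intros t [Ht _]; lra.
  - exists 0. exact HE0.
  - assert (Hm0 : 0 <= m) by (apply Hub; auto).
    assert (Hm1 : m <= 1) by (apply Hlub; intros t [Ht _]; lra).
    destruct (Hloc m) as [eta [Heta Hnear]].
    assert (Hbelow : exists t0, E t0 /\ m - eta < t0).
    { apply NNPP. intro Hno. assert (m <= m - eta); [|lra].
      apply Hlub. intros t Et. apply Rnot_lt_le. intro Hlt. apply Hno. exists t; auto. }
    destruct Hbelow as [t0 [[Ht0 HPt0] Ht0m]].
    assert (Ht0le : t0 <= m) by (apply Hub; split; auto).
    assert (Pm : P m) by (apply (Hnear t0); [apply Rabs_def1; lra|apply HPt0; lra]).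
    set (t1 := Rmin 1 (m + eta / 2)).
    assert (Ht1 : t1 <= m + eta / 2) by apply Rmin_r.
    assert (Et1 : E t1).
    { split; [split; [unfold t1; apply Rmin_glb; lra|apply Rmin_l]|].
      intros s Hs. destruct (Rle_dec s t0) as [Hs0|Hs0].
      - apply HPt0; lra.
      - apply Hnear; auto. apply Rabs_def1; lra. }
    assert (t1 <= m) by (apply Hub; auto).
    assert (Ht1one : t1 = 1).
    { unfold t1 in *. unfold Rmin in *. destruct (Rle_dec 1 (m + eta / 2)); lra. }
    destruct Et1 as [_ HP]. apply HP. lra.
Qed.

(* R^n is connected: a locally constant predicate (for the sup-norm) holding at
   a holds at b, by restriction to the segment from a to b. *)
Lemma Rn_connected (n : nat) (P : Rn n -> Prop) :
  (forall x, exists d, 0 < d /\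
     forall x', (forall i, Rabs (x' i - x i) < d) -> (P x' <-> P x)) ->
  forall a b, P a -> P b.
Proof.
  intros Hloc a b Pa.
  set (segment := fun t : R => (fun i => a i + t * (b i - a i)) : Rn n).
  assert (Hseg0 : segment 0 = a) by (extensionality i; unfold segment; ring).
  assert (Hseg1 : segment 1 = b) by (extensionality i; unfold segment; ring).
  destruct (fin_max n (fun i => Rabs (b i - a i))) as [M HM].
  rewrite <- Hseg1. apply (unit_interval_connected (fun t => P (segment t)));
    [|rewrite Hseg0; exact Pa].
  intro t. destruct (Hloc (segment t)) as [d [Hd Hnear]].
  assert (HM1 : 0 < Rabs M + 1) by (pose proof (Rabs_pos M); lra).
  exists (d / (Rabs M + 1)). split; [apply Rdiv_lt_0_compat; lra|].
  intros s Hs. apply Hnear. intro i. unfold segment.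
  replace (a i + s * (b i - a i) - (a i + t * (b i - a i)))
    with ((s - t) * (b i - a i)) by ring.
  rewrite Rabs_mult.
  assert (Hba : Rabs (b i - a i) <= Rabs M + 1)
    by (specialize (HM i); pose proof (Rle_abs M); lra).
  assert (Hst : Rabs (s - t) * (Rabs M + 1) < d).
  { apply (Rmult_lt_compat_r (Rabs M + 1)) in Hs; [|lra].
    field_simplify in Hs; lra. }
  pose proof (Rabs_pos (b i - a i)). pose proof (Rabs_pos (s - t)). nra.
Qed.

Lemma gen_subgroup_sub (n : nat) (A : Zn n -> Prop) (a b : Zn n) :
  gen_subgroup A a -> gen_subgroup A b -> gen_subgroup A (fun i => (a i - b i)%Z).
Proof.
  intros Ha Hb. pose proof (gen_add A _ _ Ha (gen_opp A _ Hb)) as Hsum.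
  replace (fun i => (a i - b i)%Z) with (fun i => (a i + - b i)%Z); [exact Hsum|].
  extensionality i. lia.
Qed.

Section Generation.

Variables (n : nat) (K : Rn n -> Prop).
Hypothesis hK : N_set K.

Definition good (x : Rn n) : Prop :=
  exists y z, K y /\ diff_is_lattice x y z /\ gen_subgroup (diff_lattice_set K) z.

(* Two representatives of the same point differ by an element of (K - K) ∩ Z^n,
   hence every representative of a good point has its shift in the subgroup. *)
Lemma good_all_representatives (x y : Rn n) (z : Zn n) :
  good x -> K y -> diff_is_lattice x y z -> gen_subgroup (diff_lattice_set K) z.
Proof.
  intros [y1 [z1 [Hy1 [Hz1 Gz1]]]] Hy Hz.
  assert (Hdiff : diff_lattice_set K (fun i => (z i - z1 i)%Z)).
  { exists y1, y. repeat split; auto. intro i.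
    rewrite minus_IZR, <- Hz, <- Hz1. ring. }
  pose proof (gen_add _ _ _ (gen_in _ _ Hdiff) Gz1) as Hsum.
  replace z with (fun i => (z i - z1 i + z1 i)%Z); [exact Hsum|].
  extensionality i. lia.
Qed.

(* Goodness is locally constant: a representative (y', z) of a point x' near x
   moves to the representative (x - z, z) of x, which stays in K because the
   coset x + Z^n is closed near K. *)
Lemma good_locally_constant (x : Rn n) :
  exists d, 0 < d /\
    forall x', (forall i, Rabs (x' i - x i) < d) -> (good x' <-> good x).
Proof.
  destruct hK as [Hc Hcover].
  destruct (coset_closed_near_compact n K x Hc) as [d [Hd Hclosed]].
  exists d. split; auto. intros x' Hx'.
  assert (Hmove : forall y' z, K y' -> diff_is_lattice x' y' z ->
                   K (fun i => x i - IZR (z i)) /\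
                   diff_is_lattice x (fun i => x i - IZR (z i)) z).
  { intros y' z Hy' Hz. assert (Hrep : diff_is_lattice x (fun i => x i - IZR (z i)) z)
      by (intro i; ring).
    split; auto. apply (Hclosed y'); [auto|exists z; auto|].
    intro i. specialize (Hz i). specialize (Hx' i).
    replace (x i - IZR (z i) - y' i) with (- (x' i - x i)) by lra.
    rewrite Rabs_Ropp. exact Hx'. }
  split.
  - intros [y' [z [Hy' [Hz Gz]]]]. destruct (Hmove y' z Hy' Hz) as [Hy Hrep].
    exists (fun i => x i - IZR (z i)), z. auto.
  - intros Hgood. destruct (Hcover x') as [y' [Hy' [z Hz]]].
    destruct (Hmove y' z Hy' Hz) as [Hy Hrep].
    exists y', z. repeat split; auto.
    apply (good_all_representatives x (fun i => x i - IZR (z i)) z); auto.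
Qed.

(* Points of K are good (with shift 0), so by connectedness y0 + z is good for
   y0 ∈ K; its representative y0 has shift z, which is thus generated. *)
Lemma diff_lattice_generates : generates_Zn (diff_lattice_set K).
Proof.
  intro z. destruct hK as [_ Hcover].
  destruct (Hcover (fun _ => 0)) as [y0 [Hy0 _]].
  assert (Hgood0 : good y0).
  { exists y0, (fun _ => 0%Z). repeat split; auto; [intro i; simpl; ring|].
    apply gen_zero. }
  set (x := fun i => y0 i + IZR (z i)).
  apply (good_all_representatives x y0); auto;
    [|intro i; unfold x; ring].
  exact (Rn_connected n good good_locally_constant y0 x Hgood0).
Qed.

End Generation.

Theorem mainTheorem8 (n : nat) (hn : (1 <= n)%nat) (K : Rn n -> Prop)
  (hK : N_set K) :
  finite_set (diff_lattice_set K) /\ generates_Zn (diff_lattice_set K).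
Proof.
  split.
  - apply diff_lattice_finite. exact (proj1 hK).
  - apply diff_lattice_generates. exact hK.
Qed.
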